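(* Let $\alpha,\beta,\gamma,x\in\mathbb{N}_0$ with $(\alpha,\beta,\gamma,x)\neq(0,0,0,0)$, let $\lambda$ be a nonnegative integer and $n$ a nonnegative integer. Then $$A^{\lambda,x}_{n+1}(\alpha,\beta,\gamma)=\gamma\, A^{\lambda,x}_n(\alpha,\beta,\gamma+\alpha)+x\lambda\beta\, A^{\lambda+1,x}_n(\alpha,\beta,\gamma+\beta+\alpha).$$
   Context: For a number $t$ and $\alpha$, the generalised factorial is $(t|\alpha)_n=\prod_{j=0}^{n-1}(t-j\alpha)$ for $n\ge 1$ and $(t|\alpha)_0=1$. For parameters $\alpha,\beta,\gamma$, the generalised Stirling numbers $S(n,k,\alpha,\beta,\gamma)$ ($0\le k\le n$) are defined by the polynomial identity $(t|\alpha)_n=\sum_{k=0}^{n}S(n,k,\alpha,\beta,\gamma)\,(t-\gamma|\beta)_k$ in the variable $t$. For a nonnegative integer $\lambda$ put $\binom{k+\lambda-1}{k}=\lambda(\lambda+1)\cdots(\lambda+k-1)/k!$ (equal to $1$ for $k=0$). Define $$A^{\lambda,x}_n(\alpha,\beta,\gamma)=\sum_{k=0}^{n}\binom{k+\lambda-1}{k}(-1)^{n+k}\beta^k k!\,S(n,k,\alpha,-\beta,-\gamma)\,x^k .$$ *)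

From mathcomp Require Import all_boot all_order all_algebra.
Set Implicit Arguments. Unset Strict Implicit. Unset Printing Implicit Defensive.
Import Order.TTheory GRing.Theory Num.Theory.
Local Open Scope ring_scope.

(* Generalised factorial (t|a)_n = prod_{j<n} (t - j a), as a polynomial
   expression in a polynomial t (over int). (t|a)_0 = 1 (empty product). *)
Definition gfact (t : {poly int}) (a : int) (n : nat) : {poly int} :=
  \prod_(j < n) (t - (j%:R * a)%:P).

(* S is a family of generalised Stirling numbers: for all n, alpha, beta, gamma,
   (t|alpha)_n = sum_{k=0}^n S(n,k,alpha,beta,gamma) (t-gamma|beta)_k
   as an identity of polynomials in the variable t = 'X.
   (The coefficients are uniquely determined since (t-gamma|beta)_k is monic
   of degree k; so this property characterises S(n,k,.,.,.) for 0<=k<=n.) *)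
Definition is_gen_stirling (S : nat -> nat -> int -> int -> int -> int) : Prop :=
  forall (n : nat) (a b g : int),
    gfact 'X a n = \sum_(k < n.+1) S n k a b g *: gfact ('X - g%:P) b k.

(* binom(k+lam-1, k) = lam(lam+1)...(lam+k-1)/k!  (equals 1 for k = 0) *)
Definition rbinom (lam k : nat) : nat := 'C((k + lam).-1, k).

Definition Apoly (S : nat -> nat -> int -> int -> int -> int)
    (lam : nat) (x : int) (n : nat) (a b g : int) : int :=
  \sum_(k < n.+1) (rbinom lam k)%:R * (-1) ^+ (n + k) * b ^+ k * (k`!)%:R
                  * S n k a (- b) (- g) * x ^+ k.

From mathcomp Require Import all_boot all_order all_algebra.
From mathcomp Require Import ring.
Import Order.TTheory GRing.Theory Num.Theory.
Local Open Scope ring_scope.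

(* Write c_{n,k}(g) = S(n,k,a,-b,-g): the coordinates of (t|a)_n in the monic
   basis (t+g)(t+g+b)...(t+g+(k-1)b).  Comparing coordinates gives two
   recurrences: (t|a)_{n+1} = t (t-a|a)_n yields
     c_{n+1,k}(g) = c_{n,k-1}(g+a) - (g+kb) c_{n,k}(g+a),
   and moving the basis from g to g+b yields
     c_{n,k}(g+b) = c_{n,k}(g) - (k+1)b c_{n,k+1}(g).
   Substituting the first into A^lam_{n+1}(g) and the second into
   A^{lam+1}_n(g+b+a), and matching weights through
   lam binom(k+lam,k) = (k+1) binom(k+lam,k+1), both sides of the identity become
   the same combination of the c_{n,k}(g+a). *)

Lemma sum_ord_shift {V : nmodType} (m : nat) (f : nat -> V) :
  f 0%N = 0 -> f m.+1 = 0 -> \sum_(k < m.+1) f k = \sum_(k < m.+1) f k.+1.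
Proof.
by move=> f0 fm; rewrite big_ord_recl f0 add0r big_ord_recr /= fm addr0.
Qed.

Lemma sum_ord_widen0 {V : nmodType} (n m : nat) (F : nat -> V) :
  (n <= m)%N -> (forall k, (n <= k)%N -> F k = 0) ->
  \sum_(k < n) F k = \sum_(k < m) F k.
Proof.
move=> le_nm F0; rewrite (big_ord_widen m F le_nm) big_mkcond /=.
by apply: eq_bigr => k _; case: ltnP => // /F0.
Qed.

Lemma monic_basis_coord_inj {R : nzRingType} (P : nat -> {poly R})
    (m : nat) (d e : nat -> R) :
  (forall k, P k \is monic) -> (forall k, size (P k) = k.+1) ->
  \sum_(k < m) d k *: P k = \sum_(k < m) e k *: P k ->
  forall k, (k < m)%N -> d k = e k.
Proof.
move=> Pmonic sizeP; elim: m => // m IH; rewrite !big_ord_recr /=.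
have coef_top (c : nat -> R) : (\sum_(k < m) c k *: P k + c m *: P m)`_m = c m.
  have /monicP := Pmonic m; rewrite lead_coefE sizeP /= => Pm1.
  rewrite coefD coefZ Pm1 mulr1 coef_sum big1 ?add0r // => k _.
  by rewrite coefZ nth_default ?mulr0 // sizeP.
move=> eq_sum; have dm : d m = e m by rewrite -(coef_top d) eq_sum coef_top.
move: eq_sum; rewrite dm => /addIr eq_sum k.
by rewrite ltnS leq_eqVlt => /predU1P[-> //|]; apply: IH.
Qed.

Lemma gfactSr (t : {poly int}) (a : int) (n : nat) :
  gfact t a n.+1 = gfact t a n * (t - (n%:R * a)%:P).
Proof. by rewrite /gfact big_ord_recr. Qed.

Lemma gfactSl (t : {poly int}) (a : int) (n : nat) :
  gfact t a n.+1 = t * gfact (t - a%:P) a n.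
Proof.
rewrite /gfact big_ord_recl mul0r subr0; congr (_ * _).
by apply: eq_bigr => j _; rewrite lift0 -addn1 natrD mulrDl mul1r polyCD; ring.
Qed.

Lemma gfact_comp (t q : {poly int}) (a : int) (n : nat) :
  gfact t a n \Po q = gfact (t \Po q) a n.
Proof.
by rewrite /gfact rmorph_prod; apply: eq_bigr => j _; rewrite /= comp_polyB comp_polyC.
Qed.

Lemma gfact_XsubC (c a : int) (n : nat) :
  gfact ('X - c%:P) a n = \prod_(j < n) ('X - (c + j%:R * a)%:P).
Proof. by apply: eq_bigr => j _; rewrite polyCD opprD addrA. Qed.

Lemma gfact_XsubC_monic (c a : int) (n : nat) : gfact ('X - c%:P) a n \is monic.
Proof. by rewrite gfact_XsubC monic_prod_XsubC. Qed.

Lemma size_gfact_XsubC (c a : int) (n : nat) : size (gfact ('X - c%:P) a n) = n.+1.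
Proof.
by rewrite gfact_XsubC size_prod_XsubC /index_enum -enumT size_enum_ord.
Qed.

Definition rising (b g : int) (k : nat) : {poly int} := gfact ('X - (- g)%:P) (- b) k.

Lemma rising0 (b g : int) : rising b g 0 = 1.
Proof. exact: big_ord0. Qed.

Lemma risingSr (b g : int) (k : nat) :
  rising b g k.+1 = rising b g k * ('X + (g + k%:R * b)%:P).
Proof.
by rewrite /rising gfactSr; congr (_ * _); rewrite !rmorphN !rmorphD !rmorphM /=; ring.
Qed.

Lemma risingSl (b g : int) (k : nat) :
  rising b g k.+1 = ('X + g%:P) * rising b (g + b) k.
Proof. by rewrite /rising gfactSl !polyCN !opprK polyCD addrA. Qed.

Lemma rising_comp (a b g : int) (k : nat) :
  rising b (g + a) k \Po ('X - a%:P) = rising b g k.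
Proof.
rewrite /rising gfact_comp comp_polyB comp_polyX comp_polyC !polyCN polyCD.
by congr gfact; ring.
Qed.

Lemma rising_monic (b g : int) (k : nat) : rising b g k \is monic.
Proof. exact: gfact_XsubC_monic. Qed.

Lemma size_rising (b g : int) (k : nat) : size (rising b g k) = k.+1.
Proof. exact: size_gfact_XsubC. Qed.

Lemma rising_coord_inj (b g : int) (m : nat) (d e : nat -> int) :
  \sum_(k < m) d k *: rising b g k = \sum_(k < m) e k *: rising b g k ->
  forall k, (k < m)%N -> d k = e k.
Proof. exact: monic_basis_coord_inj (rising_monic b g) (size_rising b g). Qed.

Lemma mulX_rising (b g : int) (k : nat) :
  'X * rising b g k = rising b g k.+1 - (g + k%:R * b) *: rising b g k.
Proof. by rewrite risingSr -mul_polyC; ring. Qed.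

Lemma rising_shift (b g : int) (k : nat) :
  rising b g k = rising b (g + b) k - (k%:R * b) *: rising b (g + b) k.-1.
Proof.
case: k => [|k]; first by rewrite mul0r scale0r subr0 !rising0.
rewrite /= risingSl risingSr -mul_polyC -addn1 natrD !rmorphD !rmorphM /=; ring.
Qed.

Lemma rbinom_succ (lam k : nat) :
  (lam * rbinom lam.+1 k = k.+1 * rbinom lam k.+1)%N.
Proof. by rewrite /rbinom addnS addSn /= mul_bin_left addnC addnK mulnC. Qed.

Section StirlingCoordinates.

Variables (S : nat -> nat -> int -> int -> int -> int) (a b : int).
Hypothesis HS : is_gen_stirling S.

Definition stir (n k : nat) (g : int) : int :=
  if (k <= n)%N then S n k a (- b) (- g) else 0.

Lemma stir_out (n k : nat) (g : int) : (n < k)%N -> stir n k g = 0.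
Proof. by rewrite /stir ltnNge => /negbTE ->. Qed.

Lemma gfact_expand (m n : nat) (g : int) : (n < m)%N ->
  gfact 'X a n = \sum_(k < m) stir n k g *: rising b g k.
Proof.
move=> lt_nm; pose F k := stir n k g *: rising b g k.
transitivity (\sum_(k < n.+1) F k).
  rewrite (HS n a (- b) (- g)); apply: eq_bigr => k _.
  by rewrite /F /stir -ltnS ltn_ord.
by apply: (@sum_ord_widen0 _ n.+1 m F) => // k lt_nk; rewrite /F stir_out ?scale0r.
Qed.

Lemma stirS (n k : nat) (g : int) :
  stir n.+1 k g = (if k is j.+1 then stir n j (g + a) else 0)
                   - (g + k%:R * b) * stir n k (g + a).
Proof.
have [lt_k | le_k] := ltnP n.+1 k.
  by case: k lt_k => // k lt_k; rewrite !stir_out ?mulr0 ?subr0 // ltnW.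
pose c k := stir n k (g + a); pose c' k := if k is j.+1 then c j else 0.
pose e k := c' k - (g + k%:R * b) * c k.
apply: (@rising_coord_inj b g n.+2 (stir n.+1 ^~ g) e _ k le_k).
rewrite -gfact_expand //.
have -> : gfact 'X a n.+1 = \sum_(k < n.+2) c k *: ('X * rising b g k).
  rewrite gfactSl -{1}(comp_polyX ('X - a%:P)) -gfact_comp.
  rewrite (gfact_expand n.+2 n (g + a)) //.
  rewrite linear_sum mulr_sumr; apply: eq_bigr => i _.
  by rewrite linearZ /= rising_comp scalerAr.
under eq_bigr do rewrite mulX_rising scalerBr scalerA.
rewrite sumrB -(sum_ord_shift n.+1 (fun k => c' k *: rising b g k));
  try by rewrite /c' /c ?stir_out ?scale0r.
by rewrite -sumrB; apply: eq_bigr => i _; rewrite scalerBl [c _ * _]mulrC.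
Qed.

Lemma stir_shift (n k : nat) (g : int) :
  stir n k (g + b) = stir n k g - k.+1%:R * b * stir n k.+1 g.
Proof.
have [lt_k | le_k] := ltnP n k.
  by rewrite !stir_out ?mulr0 ?subr0 // ltnW.
pose e k := stir n k g - k.+1%:R * b * stir n k.+1 g.
apply: (@rising_coord_inj b (g + b) n.+1 (stir n ^~ (g + b)) e _ k le_k).
rewrite -gfact_expand // (gfact_expand n.+1 n g) //.
under eq_bigr do rewrite rising_shift scalerBr scalerA.
pose f k := (stir n k g * (k%:R * b)) *: rising b (g + b) k.-1.
rewrite sumrB (sum_ord_shift n f);
  try by rewrite /f ?mul0r ?mulr0 ?stir_out ?mul0r ?scale0r.
by rewrite -sumrB; apply: eq_bigr => i _; rewrite /f scalerBl [_ * (_ * b)]mulrC.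
Qed.

Variable x : int.

Definition weight (lam n k : nat) : int :=
  (rbinom lam k)%:R * (-1) ^+ (n + k) * b ^+ k * (k`!)%:R * x ^+ k.

Lemma weight_succn (lam n k : nat) : weight lam n.+1 k = - weight lam n k.
Proof. by rewrite /weight addSn exprS; ring. Qed.

Lemma weight_succlam (lam n k : nat) :
  x * lam%:R * b * weight lam.+1 n k = weight lam n.+1 k.+1.
Proof.
have binom : lam%:R * (rbinom lam.+1 k)%:R = k.+1%:R * (rbinom lam k.+1)%:R :> int.
  by rewrite -!natrM rbinom_succ.
transitivity (lam%:R * (rbinom lam.+1 k)%:R
               * ((-1) ^+ (n + k) * b ^+ k.+1 * (k`!)%:R * x ^+ k.+1)).
  by rewrite /weight !exprS; ring.
by rewrite binom /weight addSn addnS !exprS factS natrM; ring.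
Qed.

Lemma Apoly_weight (lam n m : nat) (g : int) : (n < m)%N ->
  Apoly S lam x n a b g = \sum_(k < m) weight lam n k * stir n k g.
Proof.
move=> lt_nm; pose F k := weight lam n k * stir n k g.
transitivity (\sum_(k < n.+1) F k).
  by apply: eq_bigr => k _; rewrite /F /stir -ltnS ltn_ord /weight mulrAC.
by apply: (@sum_ord_widen0 _ n.+1 m F) => // k lt_nk; rewrite /F stir_out ?mulr0.
Qed.

Lemma ApolyS_expand (lam n : nat) (g : int) :
  Apoly S lam x n.+1 a b g = g * Apoly S lam x n a b (g + a)
    + \sum_(k < n.+2)
        (weight lam n.+1 k.+1 + k%:R * b * weight lam n k) * stir n k (g + a).
Proof.
rewrite (@Apoly_weight lam n.+1 n.+2) // (@Apoly_weight lam n n.+2) // mulr_sumr.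
under eq_bigr do rewrite stirS mulrBr.
pose f k := weight lam n.+1 k * (if k is j.+1 then stir n j (g + a) else 0).
rewrite sumrB (sum_ord_shift n.+1 f); try by rewrite /f ?stir_out ?mulr0.
rewrite -sumrN -!big_split /=; apply: eq_bigr => k _.
by rewrite /f /= !weight_succn; ring.
Qed.

Lemma Apoly_succlam_expand (lam n : nat) (g : int) :
  x * lam%:R * b * Apoly S lam.+1 x n a b (g + b)
  = \sum_(k < n.+2)
      (weight lam n.+1 k.+1 + k%:R * b * weight lam n k) * stir n k g.
Proof.
pose f k := k%:R * b * weight lam n k * stir n k g.
rewrite (@Apoly_weight lam.+1 n n.+2) // mulr_sumr.
transitivity (\sum_(k < n.+2) (weight lam n.+1 k.+1 * stir n k g + f k.+1)).
  apply: eq_bigr => k _.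
  by rewrite mulrA weight_succlam stir_shift /f weight_succn; ring.
rewrite big_split /= -(sum_ord_shift n.+1 f); try by rewrite /f ?mul0r ?stir_out ?mulr0.
by rewrite -big_split /=; apply: eq_bigr => k _; rewrite mulrDl.
Qed.

End StirlingCoordinates.

Theorem theorem2 (S : nat -> nat -> int -> int -> int -> int)
    (HS : is_gen_stirling S) (a b g x lam n : nat)
    (Hnz : ~ [/\ a = 0%N, b = 0%N, g = 0%N & x = 0%N]) :
  Apoly S lam x%:Z n.+1 a%:Z b%:Z g%:Z
  = g%:Z * Apoly S lam x%:Z n a%:Z b%:Z (g%:Z + a%:Z)
    + x%:Z * lam%:Z * b%:Z * Apoly S lam.+1 x%:Z n a%:Z b%:Z (g%:Z + b%:Z + a%:Z).
Proof.
rewrite (ApolyS_expand _ _ _ HS) [g%:Z + b%:Z + _]addrAC -[lam%:Z]natz.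
by rewrite (Apoly_succlam_expand _ _ _ HS).
Qed.
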